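(* Let $c\in\mathbb{R}\setminus\{0\}$ and let $\mathbf f_c:\mathbb{R}^2\to\mathbb{R}^2$ be $$\mathbf f_c(u,v)=\bigl(-3u^2-cv,\ -3v^2-cu\bigr).$$ Let $\mathbf s=(s_1,s_2)$ be a point such that $\mathbf f_c(\mathbf x)=\mathbf s$ has exactly four distinct solutions $\mathbf x_i=(u_i,v_i)\in\mathbb{R}^2$, $i=1,\dots,4$, each with $\det(\mathrm{Jac}\,\mathbf f_c)(\mathbf x_i)\neq0$. Then, with $\mathfrak M_i=1/\det(\mathrm{Jac}\,\mathbf f_c)(\mathbf x_i)=\frac{1}{36u_iv_i-c^2}$, $$\mathfrak M_1+\mathfrak M_2+\mathfrak M_3+\mathfrak M_4=0.$$
   Context: $\mathbf f_c$ is the generic local form of a one-parameter family of maps between planes near a hyperbolic umbilic singularity; it is induced by the family of functions $F_{c,\mathbf s}(u,v)=s_1u+s_2v+cuv+u^3+v^3$. The points $\mathbf s$ with four preimages form the four-image region of $\mathbf f_c$. *)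

From Stdlib Require Import Reals Lra.
Open Scope R_scope.

Definition fc (c : R) (x : R * R) : R * R :=
  let (u, v) := x in (-3 * u ^ 2 - c * v, -3 * v ^ 2 - c * u).

(* Determinant of the Jacobian matrix of f_c at (u,v):
   the matrix of partial derivatives is [[-6u, -c], [-c, -6v]]. *)
Definition jac_det (c : R) (x : R * R) : R :=
  let (u, v) := x in (-6 * u) * (-6 * v) - (-c) * (-c).

From Stdlib Require Import Reals Lra.
Open Scope R_scope.

(* Since c <> 0, the first equation of f_c(u,v) = (s1,s2)
   determines v from u (c v = -(s1 + 3u^2)); substituting it into the second
   equation shows that u is a root of the depressed quartic
     Q(u) = 27 u^4 + 18 s1 u^2 + c^3 u + (3 s1^2 + c^2 s2),
   and that det Jac f_c(u,v) = 36 u v - c^2 = - Q'(u) / c.  The four points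
   of the fibre have pairwise distinct u-coordinates, so they give the four
   roots u_1..u_4 of Q, and the claim becomes  sum_i 1 / Q'(u_i) = 0.
   This is a general fact about quartics with four distinct roots: by
   Vieta (obtained here through divided differences) Q'(u_i) equals
   27 prod_{j<>i} (u_i - u_j), and the sum of the reciprocals of these
   products vanishes (Lagrange interpolation of the constant 0 polynomial). *)

Lemma cancel_difference (x y z : R) : x <> y -> (x - y) * z = 0 -> z = 0.
Proof.
  intros hxy hz; destruct (Rmult_integral _ _ hz) as [h | h]; [lra | exact h].
Qed.

Section DepressedQuartic.

Variables a p q r : R.

Definition quartic (x : R) : R := a * x ^ 4 + p * x ^ 2 + q * x + r.
Definition dquartic (x : R) : R := 4 * a * x ^ 3 + 2 * p * x + q.

Definition divdiff1 (x y : R) : R :=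
  a * (x ^ 3 + x ^ 2 * y + x * y ^ 2 + y ^ 3) + p * (x + y) + q.
Definition divdiff2 (x y z : R) : R :=
  a * (x ^ 2 + y ^ 2 + z ^ 2 + x * y + x * z + y * z) + p.

Lemma divdiff1_roots (x y : R) :
  x <> y -> quartic x = 0 -> quartic y = 0 -> divdiff1 x y = 0.
Proof.
  intros hxy hx hy; apply (cancel_difference x y); auto.
  replace ((x - y) * divdiff1 x y) with (quartic x - quartic y)
    by (unfold quartic, divdiff1; ring).
  rewrite hx, hy; ring.
Qed.

Lemma divdiff2_roots (x y z : R) :
  y <> z -> divdiff1 x y = 0 -> divdiff1 x z = 0 -> divdiff2 x y z = 0.
Proof.
  intros hyz hy hz; apply (cancel_difference y z); auto.
  replace ((y - z) * divdiff2 x y z) with (divdiff1 x y - divdiff1 x z)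
    by (unfold divdiff1, divdiff2; ring).
  rewrite hy, hz; ring.
Qed.

(* Four distinct roots have vanishing third divided difference
   a (x + y + z + w); this is Vieta's relation for the missing cubic term. *)
Lemma divdiff3_roots (x y z w : R) :
  z <> w -> divdiff2 x y z = 0 -> divdiff2 x y w = 0 -> a * (x + y + z + w) = 0.
Proof.
  intros hzw hz hw; apply (cancel_difference z w); auto.
  replace ((z - w) * (a * (x + y + z + w))) with (divdiff2 x y z - divdiff2 x y w)
    by (unfold divdiff2; ring).
  rewrite hz, hw; ring.
Qed.

Lemma dquartic_at_root (u1 u2 u3 u4 : R) :
  u1 <> u2 -> u1 <> u3 -> u1 <> u4 -> u2 <> u3 -> u2 <> u4 -> u3 <> u4 ->
  quartic u1 = 0 -> quartic u2 = 0 -> quartic u3 = 0 -> quartic u4 = 0 ->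
  dquartic u1 = a * ((u1 - u2) * (u1 - u3) * (u1 - u4)).
Proof.
  intros h12 h13 h14 h23 h24 h34 r1 r2 r3 r4.
  pose proof (divdiff1_roots _ _ h12 r1 r2) as d12.
  pose proof (divdiff1_roots _ _ h13 r1 r3) as d13.
  pose proof (divdiff1_roots _ _ h14 r1 r4) as d14.
  pose proof (divdiff2_roots _ _ _ h23 d12 d13) as d123.
  pose proof (divdiff2_roots _ _ _ h24 d12 d14) as d124.
  pose proof (divdiff3_roots _ _ _ _ h34 d123 d124) as sum_roots.
  assert (hp : p = - a * (u1 ^ 2 + u2 ^ 2 + u3 ^ 2 + u1 * u2 + u1 * u3 + u2 * u3))
    by (unfold divdiff2 in d123; lra).
  assert (hq : q = - a * (u1 ^ 3 + u1 ^ 2 * u2 + u1 * u2 ^ 2 + u2 ^ 3) - p * (u1 + u2))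
    by (unfold divdiff1 in d12; lra).
  unfold dquartic; rewrite hq, hp.
  replace (a * ((u1 - u2) * (u1 - u3) * (u1 - u4)))
    with (a * ((u1 - u2) * (u1 - u3) * (2 * u1 + u2 + u3))
          - (u1 - u2) * (u1 - u3) * (a * (u1 + u2 + u3 + u4))) by ring.
  rewrite sum_roots; ring.
Qed.

End DepressedQuartic.

(* The reciprocals of the products of differences of four distinct numbers
   sum to zero (the leading coefficient of the Lagrange interpolant of 0). *)
Lemma sum_inv_difference_products (u1 u2 u3 u4 : R) :
  u1 <> u2 -> u1 <> u3 -> u1 <> u4 -> u2 <> u3 -> u2 <> u4 -> u3 <> u4 ->
  / ((u1 - u2) * (u1 - u3) * (u1 - u4)) + / ((u2 - u1) * (u2 - u3) * (u2 - u4))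
  + / ((u3 - u1) * (u3 - u2) * (u3 - u4)) + / ((u4 - u1) * (u4 - u2) * (u4 - u3)) = 0.
Proof.
  intros; field; repeat split; lra.
Qed.

(* Euler-Jacobi for depressed quartics: over four distinct roots, the
   reciprocals of the derivative sum to zero (each Q'(u_i) factors as
   a times a product of differences). *)
Lemma sum_inv_dquartic (a p q r u1 u2 u3 u4 : R) :
  u1 <> u2 -> u1 <> u3 -> u1 <> u4 -> u2 <> u3 -> u2 <> u4 -> u3 <> u4 ->
  quartic a p q r u1 = 0 -> quartic a p q r u2 = 0 ->
  quartic a p q r u3 = 0 -> quartic a p q r u4 = 0 ->
  / dquartic a p q u1 + / dquartic a p q u2 + / dquartic a p q u3 + / dquartic a p q u4 = 0.
Proof.
  intros h12 h13 h14 h23 h24 h34 r1 r2 r3 r4.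
  rewrite (dquartic_at_root a p q r u1 u2 u3 u4),
          (dquartic_at_root a p q r u2 u1 u3 u4),
          (dquartic_at_root a p q r u3 u1 u2 u4),
          (dquartic_at_root a p q r u4 u1 u2 u3); auto.
  rewrite !Rinv_mult, <- !Rmult_plus_distr_l.
  rewrite <- !Rinv_mult, sum_inv_difference_products; auto; ring.
Qed.

(* The u-coordinate of a point of the fibre f_c^{-1}(s1,s2) is a root of the
   quartic obtained by eliminating v, namely
   27 u^4 + 18 s1 u^2 + c^3 u + (3 s1^2 + c^2 s2). *)
Definition fibre_quartic (c s1 s2 u : R) : R :=
  quartic 27 (18 * s1) (c ^ 3) (3 * s1 ^ 2 + c ^ 2 * s2) u.

Lemma fc_fibre (c s1 s2 u v : R) : fc c (u, v) = (s1, s2) ->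
  c * v = - (s1 + 3 * u ^ 2) /\ fibre_quartic c s1 s2 u = 0.
Proof.
  unfold fc, fibre_quartic, quartic; intros h; injection h as h1 h2.
  split; [lra | subst; ring].
Qed.

Lemma jac_det_fibre (c s1 u v : R) : c <> 0 -> c * v = - (s1 + 3 * u ^ 2) ->
  jac_det c (u, v) = - dquartic 27 (18 * s1) (c ^ 3) u / c.
Proof.
  intros hc hv; unfold jac_det, dquartic.
  replace ((-6 * u) * (-6 * v) - (-c) * (-c)) with ((36 * u * (c * v) - c ^ 3) / c)
    by (field; exact hc).
  rewrite hv; field; exact hc.
Qed.

Lemma fc_fibre_u_distinct (c : R) (s : R * R) (u v u' v' : R) : c <> 0 -> (u, v) <> (u', v') ->
  fc c (u, v) = s -> fc c (u', v') = s -> u <> u'.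
Proof.
  intros hc hne h h' <-; apply hne; rewrite <- h' in h.
  unfold fc in h; injection h as h1 _.
  assert (hvv : c * (v - v') = 0) by lra.
  destruct (Rmult_integral _ _ hvv); [contradiction | f_equal; lra].
Qed.

Theorem theorem1 (c : R) (hc : c <> 0) (s : R * R)
  (x1 x2 x3 x4 : R * R)
  (hd12 : x1 <> x2) (hd13 : x1 <> x3) (hd14 : x1 <> x4)
  (hd23 : x2 <> x3) (hd24 : x2 <> x4) (hd34 : x3 <> x4)
  (hs1 : fc c x1 = s) (hs2 : fc c x2 = s) (hs3 : fc c x3 = s) (hs4 : fc c x4 = s)
  (hall : forall x : R * R, fc c x = s -> x = x1 \/ x = x2 \/ x = x3 \/ x = x4)
  (hj1 : jac_det c x1 <> 0) (hj2 : jac_det c x2 <> 0)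
  (hj3 : jac_det c x3 <> 0) (hj4 : jac_det c x4 <> 0) :
  / jac_det c x1 + / jac_det c x2 + / jac_det c x3 + / jac_det c x4 = 0.
Proof.
  (* Four distinct points of the fibre suffice. *)
  destruct s as [s1 s2], x1 as [u1 v1], x2 as [u2 v2], x3 as [u3 v3], x4 as [u4 v4].
  pose proof (fc_fibre_u_distinct _ _ _ _ _ _ hc hd12 hs1 hs2) as h12.
  pose proof (fc_fibre_u_distinct _ _ _ _ _ _ hc hd13 hs1 hs3) as h13.
  pose proof (fc_fibre_u_distinct _ _ _ _ _ _ hc hd14 hs1 hs4) as h14.
  pose proof (fc_fibre_u_distinct _ _ _ _ _ _ hc hd23 hs2 hs3) as h23.
  pose proof (fc_fibre_u_distinct _ _ _ _ _ _ hc hd24 hs2 hs4) as h24.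
  pose proof (fc_fibre_u_distinct _ _ _ _ _ _ hc hd34 hs3 hs4) as h34.
  destruct (fc_fibre _ _ _ _ _ hs1) as [hv1 r1].
  destruct (fc_fibre _ _ _ _ _ hs2) as [hv2 r2].
  destruct (fc_fibre _ _ _ _ _ hs3) as [hv3 r3].
  destruct (fc_fibre _ _ _ _ _ hs4) as [hv4 r4].
  rewrite (jac_det_fibre c s1 u1 v1), (jac_det_fibre c s1 u2 v2),
          (jac_det_fibre c s1 u3 v3), (jac_det_fibre c s1 u4 v4) in * by assumption.
  set (dQ := dquartic 27 (18 * s1) (c ^ 3)).
  assert (hinv : forall d, d <> 0 -> / (- d / c) = - c * / d)
    by (intros d hd; field; auto).
  assert (hdQ : forall u, - dQ u / c <> 0 -> dQ u <> 0)
    by (intros u h h0; apply h; rewrite h0; unfold Rdiv; ring).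
  rewrite (hinv _ (hdQ _ hj1)), (hinv _ (hdQ _ hj2)),
          (hinv _ (hdQ _ hj3)), (hinv _ (hdQ _ hj4)), <- !Rmult_plus_distr_l.
  rewrite (sum_inv_dquartic 27 (18 * s1) (c ^ 3) (3 * s1 ^ 2 + c ^ 2 * s2)); auto; lra.
Qed.
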